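(* Let $n\ge3$ and $B_n=\langle a,b\mid ba=b^n\rangle$. 1. $\mathcal L(B_n)$ is closed under set addition, i.e. $L_1+L_2\in\mathcal L(B_n)$ for all $L_1,L_2\in\mathcal L(B_n)$; hence $\mathcal L(B_n)$ is a monoid under set addition with identity $\{0\}$. 2. The map $\Phi:\mathcal L(B_n)\to H$, $x+(n-2)\cdot[0,q]\mapsto(x,q)$, is a monoid isomorphism onto $H=\{(k,i)\mid k,i\in\mathbb N_0,\ k=i=0\text{ or }k>i\}\subset(\mathbb N_0^2,+)$. Moreover, $H$ is a reduced atomic commutative cancellative half-factorial monoid with $\mathcal A(H)=\{(k,k-1)\mid k\in\mathbb N\}$.
   Context: $B_n$ is the monoid with generators $a,b$ and single relation $ba=b^n$; its atoms are $a,b$. $\mathsf L(y)$ is the set of $k$ such that $y$ is a product of $k$ atoms ($\mathsf L(1)=\{0\}$), $\mathcal L(B_n)=\{\mathsf L(y)\mid y\in B_n\}$; every element of $\mathcal L(B_n)$ has the form $x+(n-2)\cdot[0,q]=\{x,x+(n-2),\dots,x+q(n-2)\}$ with $x,q\in\mathbb N_0$ and ($x=q=0$ or $x>q$), uniquely determined by $(x,q)$. For sets $L_1,L_2\subset\mathbb Z$, $L_1+L_2=\{l_1+l_2\mid l_i\in L_i\}$. A monoid is half-factorial if every non-unit's factorizations into atoms all have the same length; $\mathcal A(H)$ denotes the set of atoms. *)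

From mathcomp Require Import all_boot.
Set Implicit Arguments. Unset Strict Implicit. Unset Printing Implicit Defensive.

Inductive letter := La | Lb.

(* Words over the atoms a, b; the congruence generated by  b a = b^n :
   the equivalence closure of rewriting  x (b a) y  ->  x (b^n) y. *)
Inductive bconv (n : nat) : seq letter -> seq letter -> Prop :=
| bconv_refl w : bconv n w w
| bconv_sym u v : bconv n u v -> bconv n v u
| bconv_trans u v w : bconv n u v -> bconv n v w -> bconv n u w
| bconv_step x y : bconv n (x ++ [:: Lb; La] ++ y) (x ++ nseq n Lb ++ y).

Definition natset := nat -> Prop.
Definition seteq (L1 L2 : natset) : Prop := forall k, L1 k <-> L2 k.
Definition sumset (L1 L2 : natset) : natset :=
  fun k => exists k1 k2, [/\ L1 k1, L2 k2 & k = k1 + k2].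

(* L(y) for the element y of B_n represented by the word w: the set of k such
   that y is a product of k atoms, i.e. y is represented by a word of length k. *)
Definition Lset (n : nat) (w : seq letter) : natset :=
  fun k => exists w', bconv n w w' /\ size w' = k.

Definition inLB (n : nat) (L : natset) : Prop := exists w, seteq L (Lset n w).

Definition AP (d x q : nat) : natset := fun k => exists2 i, i <= q & k = x + i * d.

Definition inH (p : nat * nat) : Prop := (p.1 = 0 /\ p.2 = 0) \/ p.2 < p.1.
Definition addp (p r : nat * nat) : nat * nat := (p.1 + r.1, p.2 + r.2).
Definition zerop : nat * nat := (0, 0).

Definition unitH (p : nat * nat) : Prop := inH p /\ exists2 r, inH r & addp p r = zerop.
Definition atomH (p : nat * nat) : Prop :=
  [/\ inH p, ~ unitH p &
      forall u v, inH u -> inH v -> addp u v = p -> unitH u \/ unitH v].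
Definition sump (s : seq (nat * nat)) : nat * nat := foldr addp zerop s.
Definition factorization (s : seq (nat * nat)) (p : nat * nat) : Prop :=
  (forall a, a \in s -> atomH a) /\ sump s = p.

Definition Phi (n : nat) (L : natset) (p : nat * nat) : Prop :=
  inH p /\ seteq L (AP (n - 2) p.1 p.2).

From mathcomp Require Import all_boot zify.

(* Since b a^i = b^(1 + i (n - 1)), every element of B_n has a unique normal
   form a^i b^j.  A word representing a^i b^j is obtained from the normal form
   by undoing some number c of rewrites b a -> b^n, each of which shortens the
   word by n - 2, and such a word exists exactly when c = 0 or c (n - 1) < j.
   So L(a^i b^j) = x + (n - 2) [0, q] with q the largest such c and
   x = i + j - q (n - 2); every (x, q) in H arises, and progressions with the
   same difference add parameterwise, which makes Phi an isomorphism.  Every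
   atom (k, k - 1) of H has coordinate difference 1, so every factorization of
   (x, q) has exactly x - q atoms. *)

Set Implicit Arguments.
Unset Strict Implicit.
Unset Printing Implicit Defensive.

Lemma bconv_cons n c u v : bconv n u v -> bconv n (c :: u) (c :: v).
Proof.
elim=> [w|u' v' _ IH|u' v' w' _ IH1 _ IH2|x y].
- exact: bconv_refl.
- exact: bconv_sym.
- exact: bconv_trans IH1 IH2.
- exact: (bconv_step n (c :: x) y).
Qed.

Lemma bconv_catl n x u v : bconv n u v -> bconv n (x ++ u) (x ++ v).
Proof. by elim: x => //= c x IH /IH; apply: bconv_cons. Qed.

Lemma seteq_sym L1 L2 : seteq L1 L2 -> seteq L2 L1.
Proof. by move=> h k; split=> /h. Qed.

Lemma seteq_trans L1 L2 L3 : seteq L1 L2 -> seteq L2 L3 -> seteq L1 L3.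
Proof. by move=> h1 h2 k; split=> [/h1/h2|/h2/h1]. Qed.

Lemma sumset_seteq L1 L2 M1 M2 :
  seteq L1 M1 -> seteq L2 M2 -> seteq (sumset L1 L2) (sumset M1 M2).
Proof.
move=> h1 h2 k; split=> -[k1 [k2 [/h1 ? /h2 ? ->]]]; by exists k1, k2.
Qed.

Lemma sumset0l L : seteq (sumset (fun k => k = 0) L) L.
Proof. by move=> k; split=> [[_ [k2 [-> ? ->]]] // | ?]; exists 0, k. Qed.

Lemma AP_q0 d x : seteq (AP d x 0) (fun k => k = x).
Proof.
move=> k; split=> [[i] | ->]; last by exists 0; rewrite ?mul0n ?addn0.
by rewrite leqn0 => /eqP -> ->; rewrite mul0n addn0.
Qed.

Lemma AP_add d x1 q1 x2 q2 :
  seteq (sumset (AP d x1 q1) (AP d x2 q2)) (AP d (x1 + x2) (q1 + q2)).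
Proof.
move=> k; split.
- case=> _ [_ [[i1 h1 ->] [i2 h2 ->] ->]].
  by exists (i1 + i2); [lia | rewrite mulnDl; lia].
- case=> i hi ->; exists (x1 + minn i q1 * d), (x2 + (i - minn i q1) * d).
  split; [by exists (minn i q1); lia | by exists (i - minn i q1); lia |].
  by rewrite addnACA -mulnDl subnKC // geq_minl.
Qed.

Lemma AP_inj d x q x' q' :
  0 < d -> seteq (AP d x q) (AP d x' q') -> x = x' /\ q = q'.
Proof.
move=> d_gt0 h.
have [i1 _ e1] : AP d x' q' x by apply h; exists 0; rewrite ?mul0n ?addn0.
have [i2 _ e2] : AP d x q x' by apply h; exists 0; rewrite ?mul0n ?addn0.
have ex : x = x' by nia.
split=> //; rewrite -ex in h.
have [i3 h3 e3] : AP d x q' (x + q * d) by apply h; exists q.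
have [i4 h4 e4] : AP d x q (x + q' * d) by apply h; exists q'.
nia.
Qed.

Section NormalForm.

Variable m : nat.

(* nf w = (i, j) with w = a^i b^j in B_(m+2), using b a^i = b^(1 + i (m+1)). *)
Fixpoint nf (w : seq letter) : nat * nat :=
  match w with
  | [::] => (0, 0)
  | La :: w' => ((nf w').1.+1, (nf w').2)
  | Lb :: w' => (0, 1 + (nf w').1 * m.+1 + (nf w').2)
  end.

Lemma nf_congr_catl x u v : nf u = nf v -> nf (x ++ u) = nf (x ++ v).
Proof. by elim: x => // [[]] x IH /IH /= ->. Qed.

Lemma nf_nseqLa i w : nf (nseq i La ++ w) = ((nf w).1 + i, (nf w).2).
Proof.
by elim: i => [|i IH] /=; [rewrite addn0; case: (nf w) | rewrite IH addnS].
Qed.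

Lemma nf_Lb w : nf (Lb :: w) = (0, 1 + (nf w).1 * m.+1 + (nf w).2).
Proof. by []. Qed.

Lemma nf_nseqLb_cat k y :
  nf (nseq k.+1 Lb ++ y) = (0, k.+1 + (nf y).1 * m.+1 + (nf y).2).
Proof.
elim: k => [|k IH] //.
rewrite (_ : nseq k.+2 Lb ++ y = Lb :: nseq k.+1 Lb ++ y) // nf_Lb IH /=.
congr (_, _); lia.
Qed.

Lemma nf_abword i j : nf (nseq i La ++ nseq j Lb) = (i, j).
Proof.
rewrite nf_nseqLa; case: j => [|j]; first by [].
by rewrite -[nseq j.+1 Lb]cats0 nf_nseqLb_cat /=; congr (_, _); lia.
Qed.

Lemma bconv_nf u v : bconv m.+2 u v -> nf u = nf v.
Proof.
elim=> {u v} [w|u v _ ->|u v w _ -> _ ->|x y] //.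
apply: nf_congr_catl; rewrite nf_nseqLb_cat /=; congr (_, _); lia.
Qed.

Lemma bconv_b_nseqLa i z :
  bconv m.+2 (Lb :: nseq i La ++ z) (nseq (1 + i * m.+1) Lb ++ z).
Proof.
elim: i => [|i IH]; first by rewrite mul0n addn0; apply: bconv_refl.
have step := bconv_step m.+2 [::] (nseq i La ++ z).
apply: bconv_trans step _.
rewrite cat0s (_ : nseq m.+2 Lb ++ _ = nseq m.+1 Lb ++ Lb :: nseq i La ++ z);
  last by elim: m.+1 => //= k ->.
apply: bconv_trans (bconv_catl (nseq m.+1 Lb) IH) _.
rewrite catA -nseqD (_ : m.+1 + _ = 1 + i.+1 * m.+1);
  last by rewrite mulSn; lia.
exact: bconv_refl.
Qed.

Lemma bconv_abword w : bconv m.+2 w (nseq (nf w).1 La ++ nseq (nf w).2 Lb).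
Proof.
elim: w => [|[] w IH]; first exact: bconv_refl.
- exact: bconv_cons.
- apply: bconv_trans (bconv_cons Lb IH) _.
  rewrite nf_Lb [_.1]/= [_.2]/= cat0s nseqD.
  exact: bconv_b_nseqLa.
Qed.

Lemma bconv_nfE u v : bconv m.+2 u v <-> nf u = nf v.
Proof.
split=> [|e]; first exact: bconv_nf.
apply: bconv_trans (bconv_abword u) _; rewrite e.
exact/bconv_sym/bconv_abword.
Qed.

(* The number of rewrites b a -> b^(m+2) that bring w to its normal form;
   each of them lengthens the word by m. *)
Fixpoint nf_defect (w : seq letter) : nat :=
  match w with
  | [::] => 0
  | La :: w' => nf_defect w'
  | Lb :: w' => (nf w').1 + nf_defect w'
  end.

Lemma size_nf_defect w : size w + nf_defect w * m = (nf w).1 + (nf w).2.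
Proof. by elim: w => [|[] w IH] //=; nia. Qed.

Lemma nf_defect_bound w : nf_defect w * m.+1 <= (nf w).2.-1.
Proof. by elim: w => [|[] w IH] //=; nia. Qed.

Lemma Lset_nf w k :
  Lset m.+2 w k <->
  exists2 c, c * m.+1 <= (nf w).2.-1 & k + c * m = (nf w).1 + (nf w).2.
Proof.
split.
- case=> w' [/bconv_nf e <-]; exists (nf_defect w'); rewrite e.
  + exact: nf_defect_bound.
  + exact: size_nf_defect.
- case: (nf w) (bconv_abword w) => i [|j] wE [c /= hc hk].
  + exists (nseq i La ++ nseq 0 Lb); split; first exact: wE.
    rewrite size_cat !size_nseq; nia.
  + exists (nseq i La ++ Lb :: nseq c La ++ nseq (j - c * m.+1) Lb); split.
    * apply: bconv_trans wE _; apply/bconv_nfE.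
      rewrite nf_abword nf_nseqLa nf_Lb nf_abword /=; congr (_, _); lia.
    * rewrite size_cat /= size_cat !size_nseq; nia.
Qed.

(* The parameters (x, q) of L(a^i b^j) = x + m [0, q]. *)
Definition Lparams (p : nat * nat) : nat * nat :=
  let q := p.2.-1 %/ m.+1 in (p.1 + p.2 - q * m, q).

Lemma Lset_AP w :
  seteq (Lset m.+2 w) (AP m (Lparams (nf w)).1 (Lparams (nf w)).2).
Proof.
move=> k; rewrite Lset_nf; case: (nf w) => i j /=.
have := leq_divM j.-1 m.+1; have := @leq_divRL _ j.-1 m.+1 isT.
move: (j.-1 %/ m.+1) => q le_q le_qj.
split=> [[c hc hk] | [r hr ->]].
- have cq : c <= q by rewrite le_q.
  exists (q - c); first lia.
  have : c * m <= q * m by rewrite leq_mul2r cq orbT.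
  rewrite mulnBl; nia.
- exists (q - r); last (rewrite mulnBl; nia).
  by rewrite -le_q leq_subr.
Qed.

Lemma Lparams_inH p : inH (Lparams p).
Proof.
case: p => i j; rewrite /inH /Lparams /=.
have := leq_divM j.-1 m.+1; move: (j.-1 %/ m.+1) => q; rewrite mulnS; nia.
Qed.

Lemma Lparams_surj p : inH p -> exists w, Lparams (nf w) = p.
Proof.
case: p => x q [[/= -> ->] | /= lt_qx]; first by exists [::].
exists (nseq (x - q.+1) La ++ nseq (q * m.+1).+1 Lb).
by rewrite nf_abword /Lparams /= mulnK //; congr (_, _); rewrite mulnS; lia.
Qed.

End NormalForm.

Lemma inH_addp p r : inH p -> inH r -> inH (addp p r).
Proof. by case: p r => [a b] [c d]; rewrite /inH /addp /=; lia. Qed.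

Lemma addpC p r : addp p r = addp r p.
Proof. by rewrite /addp addnC [p.2 + _]addnC. Qed.

Lemma addpI p r s : addp p r = addp p s -> r = s.
Proof. by case: r s => [a b] [c d] [/addnI -> /addnI ->]. Qed.

Lemma PhiE m L p : Phi m.+2 L p <-> inH p /\ seteq L (AP m p.1 p.2).
Proof. by rewrite /Phi subn2. Qed.

Lemma inLB_Phi m L : inLB m.+2 L <-> exists p, Phi m.+2 L p.
Proof.
split=> [[w hL] | [p /PhiE [hp hL]]].
- exists (Lparams m (nf m w)); apply/PhiE; split; first exact: Lparams_inH.
  exact: seteq_trans hL (Lset_AP m w).
- have [w pE] := Lparams_surj m hp; rewrite -pE in hL.
  by exists w; apply: seteq_trans hL (seteq_sym (Lset_AP m w)).
Qed.

Lemma Phi_sumset m L1 L2 p1 p2 :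
  Phi m.+2 L1 p1 -> Phi m.+2 L2 p2 -> Phi m.+2 (sumset L1 L2) (addp p1 p2).
Proof.
move=> /PhiE [h1 e1] /PhiE [h2 e2]; apply/PhiE; split; first exact: inH_addp.
exact: seteq_trans (sumset_seteq e1 e2) (AP_add _ _ _ _ _).
Qed.

Lemma Phi_zero m : Phi m.+2 (fun k => k = 0) zerop.
Proof. by apply/PhiE; split; [left | apply/seteq_sym/AP_q0]. Qed.

Lemma Phi_uniq m L p p' : 0 < m -> Phi m.+2 L p -> Phi m.+2 L p' -> p = p'.
Proof.
move=> m_gt0 /PhiE [_ e] /PhiE [_ e'].
have [] := AP_inj m_gt0 (seteq_trans (seteq_sym e) e').
by case: p p' {e e'} => ? ? [? ?] /= -> ->.
Qed.

Lemma unitHE p : unitH p <-> p = zerop.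
Proof.
split=> [[_ [[c d] _ [ha hb]]] | ->].
  by case: p ha hb => a b /= ha hb; congr (_, _); lia.
by split; [left | exists zerop; [left |]].
Qed.

Lemma atomHE p : atomH p <-> exists2 k, 1 <= k & p = (k, k - 1).
Proof.
split=> [[hp /unitHE p0 hdec] | [k k_gt0 ->]].
- case: p hp p0 hdec => a b; rewrite /inH /= => -[[-> ->] // | lt_ba] _ hdec.
  exists a; first lia.
  have : unitH (b.+1, b) \/ unitH (a - b.+1, 0).
    by apply: hdec; rewrite /inH /addp /=; try congr (_, _); lia.
  by case=> /unitHE [] *; congr (_, _); lia.
- split=> [|/unitHE [] | [u1 u2] [v1 v2]]; rewrite /inH /addp /=; [lia | lia |].
  move=> [[-> ->] | hu]; first by left; apply/unitHE.
  move=> [[-> ->] | hv]; first by right; apply/unitHE.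
  case; lia.
Qed.

Lemma factorization_size s p : factorization s p -> p.1 = p.2 + size s.
Proof.
elim: s p => [|a s IH] p [atoms <-] //=.
have [k k_gt0 ->] : exists2 k, 1 <= k & a = (k, k - 1).
  by apply/atomHE/atoms; rewrite inE eqxx.
have /= := IH _ (conj (fun b bs => atoms b (mem_behead bs)) erefl); lia.
Qed.

Lemma factorization_exists p :
  inH p -> p <> zerop -> exists s, factorization s p.
Proof.
case: p => a b [[/= -> ->] // | /= lt_ba] _.
exists ((b.+1, b) :: nseq (a - b.+1) (1, 0)); split.
- move=> u; rewrite inE => /orP [/eqP -> | /nseqP [-> _]]; apply/atomHE.
  + by exists b.+1; rewrite ?subn1.
  + by exists 1.
- change (addp (b.+1, b) (sump (nseq (a - b.+1) (1, 0))) = (a, b)).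
  have -> : sump (nseq (a - b.+1) (1, 0)) = (a - b.+1, 0).
    by elim: (a - b.+1) => //= k ->.
  by rewrite /addp /=; congr (_, _); lia.
Qed.

Theorem theorem4p5 (n : nat) (hn : 3 <= n) :
  (* 1. closure under set addition; {0} = L(1) is the identity *)
  ((forall L1 L2, inLB n L1 -> inLB n L2 -> inLB n (sumset L1 L2)) /\
   inLB n (fun k => k = 0) /\
   (forall L, inLB n L -> seteq (sumset (fun k => k = 0) L) L)) /\
  (* 2. Phi is a well-defined monoid isomorphism L(B_n) -> H *)
  ((forall L, inLB n L -> exists! p, Phi n L p) /\
   (forall L1 L2 p, inLB n L1 -> inLB n L2 -> Phi n L1 p -> Phi n L2 p -> seteq L1 L2) /\
   (forall p, inH p -> exists2 L, inLB n L & Phi n L p) /\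
   (forall L1 L2 p1 p2, inLB n L1 -> inLB n L2 -> Phi n L1 p1 -> Phi n L2 p2 ->
      Phi n (sumset L1 L2) (addp p1 p2)) /\
   Phi n (fun k => k = 0) zerop) /\
  (* H is a reduced atomic commutative cancellative half-factorial submonoid
     with atoms {(k, k-1) | k >= 1} *)
  (inH zerop /\ (forall p r, inH p -> inH r -> inH (addp p r)) /\
   (forall p r, addp p r = addp r p) /\
   (forall p, unitH p <-> p = zerop) /\
   (forall p r s, inH p -> inH r -> inH s -> addp p r = addp p s -> r = s) /\
   (forall p, inH p -> ~ unitH p -> exists s, factorization s p) /\
   (forall p s t, inH p -> ~ unitH p -> factorization s p -> factorization t p ->
      size s = size t) /\
   (forall p, atomH p <-> exists2 k, 1 <= k & p = (k, k - 1))).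
Proof.
have [m -> m_gt0] : exists2 m, n = m.+2 & 0 < m by exists n.-2; lia.
split; [split; [|split] |].
- move=> L1 L2 /inLB_Phi [p1 h1] /inLB_Phi [p2 h2].
  by apply/inLB_Phi; exists (addp p1 p2); apply: Phi_sumset.
- by apply/inLB_Phi; exists zerop; apply: Phi_zero.
- by move=> L _; apply: sumset0l.
split; [split; [|split; [|split; [|split]]] |].
- by move=> L /inLB_Phi [p hp]; exists p; split=> // p'; apply: Phi_uniq.
- move=> L1 L2 p _ _ /PhiE [_ e1] /PhiE [_ e2].
  exact: seteq_trans e1 (seteq_sym e2).
- move=> p hp; have hL : Phi m.+2 (AP m p.1 p.2) p by apply/PhiE.
  by exists (AP m p.1 p.2); first by apply/inLB_Phi; exists p.
- by move=> L1 L2 p1 p2 _ _; apply: Phi_sumset.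
- exact: Phi_zero.
split; first by left.
split; first exact: inH_addp.
split; first exact: addpC.
split; first exact: unitHE.
split; first by move=> p r s _ _ _ /addpI.
split; first by move=> p hp /unitHE; apply: factorization_exists.
split; last exact: atomHE.
by move=> p s t _ _ /factorization_size hs /factorization_size ht; lia.
Qed.
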